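(* Let $\mathcal A$ be a mixed online algorithm for an online problem $(\mathcal X,\mathcal R,d)$. Then there exist (1) a randomized algorithm $\mathcal A_1$ given as a probability distribution over deterministic online algorithms, (2) a behavioral online algorithm $\mathcal A_2$, and (3) a distributional online algorithm $\mathcal A_3$, all for the same problem, such that for every finite request sequence $\varrho$ the expected cost of $\mathcal A_1$ and of $\mathcal A_2$ on $\varrho$, and the cost of $\mathcal A_3$ on $\varrho$, are each at most $E(\mathrm{cost}_{\mathcal A}(\varrho))$.
   Context: Online problem: a set $\mathcal X$ of states (configurations), a set $\mathcal R$ of requests, a start state $s^0\in\mathcal X$, a function $d:\mathcal X\times\mathcal X\to[0,\infty)$ with $d(x,x)=0$ and $d(x,z)\le d(x,y)+d(y,z)$, and a cost function $\mathrm{cost}:\mathcal X\times\mathcal R\times\mathcal X\to[0,\infty)$ ($\mathrm{cost}(x,r,y)$ is the cost of serving request $r$ while moving from $x$ to $y$) satisfying $\mathrm{cost}(u,r,v)\le d(u,x)+\mathrm{cost}(x,r,y)+d(y,v)$ for all $u,x,y,v\in\mathcal X$, $r\in\mathcal R$. $\Pi$ denotes the set of finitely supported probability distributions on $\mathcal X$; a point mass at $x$ is identified with $x$. For $\pi,\pi'\in\Pi$ and $r\in\mathcal R$, $\mathrm{cost}(\pi,r,\pi')$ is the minimum transportation cost: the minimum of $\sum_{x,y}\gamma(x,y)\,\mathrm{cost}(x,r,y)$ over all probability distributions $\gamma$ on $\mathrm{supp}(\pi)\times\mathrm{supp}(\pi')$ whose first marginal is $\pi$ and second marginal is $\pi'$.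 Mixed online algorithm $\mathcal A$: a set $\mathcal M$ of memory states, a start memory state $m^0$, and for each full state $k=(\pi,m)\in\Pi\times\mathcal M$ (reachable by $\mathcal A$) and each request $r$, a finite list of ''subsequent'' full states $k_i=(\pi_i,m_i)$, $i=1,\dots,p$, with weights $\lambda_i>0$, $\sum_i\lambda_i=1$. Starting from $k^0=(s^0,m^0)$, on request $r^t$ the algorithm moves from $k^{t-1}$ to $k^t=k_i$ (the subsequents for $(k^{t-1},r^t)$) with probability $\lambda_i$. The cost of such a step is $\mathrm{cost}_{\mathcal A}(k,r)=\mathrm{cost}(\pi,r,\bar\pi)$ where $\bar\pi=\sum_i\lambda_i\pi_i$, and $\mathrm{cost}_{\mathcal A}(\varrho)=\sum_{t=1}^n\mathrm{cost}_{\mathcal A}(k^{t-1},r^t)$ (a random variable). Deterministic online algorithm: assigns to each finite request sequence $r^1\dots r^t$ a state $x^t$ depending only on $r^1,\dots,r^t$ (with $x^0=s^0$); its cost on $r^1\dots r^n$ is $\sum_t\mathrm{cost}(x^{t-1},r^t,x^t)$. A distribution over deterministic online algorithms is a random variable whose values are deterministic online algorithms; its cost is the expected cost. Behavioral online algorithm: a set $\mathcal M$ of memory states, a start memory $m^0$, and for each $(x,m)\in\mathcal X\times\mathcal M$ and $r\in\mathcal R$ a finitely supported probability distribution on $\mathcal X\times\mathcal M$; starting from $(s^0,m^0)$, on request $r^t$ it draws $(x^t,m^t)$ from the distribution associated with $(x^{t-1},m^{t-1},r^t)$; its cost is the random variable $\sum_t\mathrm{cost}(x^{t-1},r^t,x^t)$.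 Distributional online algorithm: a set $\mathcal M$ of memory states, a start memory $m^0$, and a deterministic map $(\pi,m,r)\mapsto(\pi',m')$ from $\Pi\times\mathcal M\times\mathcal R$ to $\Pi\times\mathcal M$; starting from $(s^0,m^0)$ it computes $(\pi^t,m^t)$ from $(\pi^{t-1},m^{t-1},r^t)$, and its cost is $\sum_t\mathrm{cost}(\pi^{t-1},r^t,\pi^t)$. *)

From HB Require Import structures.
From mathcomp Require Import all_boot all_order all_algebra.
From mathcomp Require Import all_classical all_reals all_analysis.
Set Implicit Arguments. Unset Strict Implicit. Unset Printing Implicit Defensive.
Import Order.TTheory GRing.Theory Num.Theory.
Local Open Scope classical_set_scope.
Local Open Scope ring_scope.

Section Defs.
Variables (R : realType) (X Req : Type).
(* cost x r y : cost of serving request r while moving from x to y *)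
Variable cost : X -> Req -> X -> R.

Definition supp (f : X -> R) : set {classic X} := [set x | f x != 0].

Record fdist := FDist {
  fmass :> X -> R;
  fmass_ge0 : forall x, 0 <= fmass x;
  fmass_fin : finite_set (supp fmass);
  fmass_sum1 : \sum_(x \in supp fmass) fmass x = 1 }.

Definition is_point_mass (pi : fdist) (s : X) :=
  forall x, fmass pi x = (`[< x = s >])%:R.

Definition coupling (f g : X -> R) (gamma : X -> X -> R) :=
  [/\ forall x y, 0 <= gamma x y,
      forall x y, gamma x y != 0 -> supp f x /\ supp g y,
      forall x, \sum_(y \in supp g) gamma x y = f x &
      forall y, \sum_(x \in supp f) gamma x y = g y].

Definition coupling_cost (f : X -> R) (r : Req) (g : X -> R) (gamma : X -> X -> R) :=
  \sum_(x \in supp f) \sum_(y \in supp g) gamma x y * cost x r y.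

(* cost(pi, r, pi') : minimum transportation cost (as an infimum, which is attained) *)
Definition tcost (f : X -> R) (r : Req) (g : X -> R) : R :=
  inf [set coupling_cost f r g gamma | gamma in coupling f g].

Section Mixed.
Variable M : Type.
Variable step : fdist * M -> Req -> seq (R * (fdist * M)).

Definition mix (l : seq (R * (fdist * M))) : X -> R :=
  fun x => \sum_(p <- l) p.1 * fmass p.2.1 x.

Definition mixed_valid :=
  forall k r, all (fun p => 0 < p.1) (step k r) /\ \sum_(p <- step k r) p.1 = 1.

(* expected value E(cost_A(rho)) of the mixed algorithm started at full state k,
   computed along the (finitely branching) random process *)
Fixpoint mixed_ecost (rho : seq Req) (k : fdist * M) : R :=
  match rho with
  | [::] => 0
  | r :: rho' => tcost (fmass k.1) r (mix (step k r))
                 + \sum_(p <- step k r) p.1 * mixed_ecost rho' p.2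
  end.
End Mixed.

(* a deterministic online algorithm maps each request prefix r^1..r^t to x^t;
   [det_cost a h rho] is the cost of serving rho after history h *)
Fixpoint det_cost_from (a : seq Req -> X) (h : seq Req) (rho : seq Req) : R :=
  match rho with
  | [::] => 0
  | r :: rho' => cost (a h) r (a (rcons h r)) + det_cost_from a (rcons h r) rho'
  end.
Definition det_cost (a : seq Req -> X) (rho : seq Req) := det_cost_from a [::] rho.

Section Behavioral.
Variable M : Type.
Variable bstep : X -> M -> Req -> seq (R * (X * M)).

Definition behavioral_valid :=
  forall x m r, all (fun p => 0 <= p.1) (bstep x m r) /\ \sum_(p <- bstep x m r) p.1 = 1.

Fixpoint behavioral_ecost (rho : seq Req) (x : X) (m : M) : R :=
  match rho with
  | [::] => 0
  | r :: rho' => \sum_(p <- bstep x m r)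
                    p.1 * (cost x r p.2.1 + behavioral_ecost rho' p.2.1 p.2.2)
  end.
End Behavioral.

Section Distributional.
Variable M : Type.
Variable dstep : fdist -> M -> Req -> fdist * M.

Fixpoint distributional_cost (rho : seq Req) (pi : fdist) (m : M) : R :=
  match rho with
  | [::] => 0
  | r :: rho' => let k := dstep pi m r in
                 tcost (fmass pi) r (fmass k.1) + distributional_cost rho' k.1 k.2
  end.
End Distributional.

End Defs.

(* Finitely supported distributions admit an optimal coupling: couplings form a
   compact polytope in finite dimension and the transport cost is linear on it.
   Given the current full state (pi, m) and position x, move to y along an optimal
   coupling of pi with the mixture pibar = sum_i lambda_i pi_i of the subsequent
   distributions, and then adopt the subsequent full state k_i with the posterior
   probability lambda_i pi_i(y) / pibar(y).  The position stays distributed as the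
   current distribution of A, and the expected cost of each step is exactly
   cost(pi, r, pibar), so this behavioral algorithm has expected cost
   E(cost_A(rho)).  Drawing a single u uniformly from [0, 1) and letting it dictate
   all the random choices turns it into a distribution over deterministic
   algorithms with the same expected cost.  Finally, the distributional algorithm
   follows the mixture of all full states A may currently be in; its cost is at
   most E(cost_A(rho)) because the transport cost is jointly convex. *)

From HB Require Import structures.
From mathcomp Require Import all_boot all_order all_algebra.
From mathcomp Require Import all_classical all_reals all_analysis.
From mathcomp Require Import finmap measurable_realfun uniform_distribution.
From mathcomp Require Import lra.
From Stdlib Require List.
Set Implicit Arguments. Unset Strict Implicit. Unset Printing Implicit Defensive.
Import Order.TTheory GRing.Theory Num.Theory.
Import numFieldTopology.Exports numFieldNormedType.Exports.
Local Open Scope classical_set_scope.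
Local Open Scope ring_scope.

Section BigIn.
Variables (R : numDomainType) (A : Type).
Implicit Types (l : seq A) (F G : A -> R).

Lemma all_In (P : pred A) l p : all P l -> List.In p l -> P p.
Proof. by elim: l => [|q l IH] //= /andP[Pq Pl] [<-|pl] //; exact: IH. Qed.

Lemma eq_big_In l F G :
  (forall p, List.In p l -> F p = G p) -> \sum_(p <- l) F p = \sum_(p <- l) G p.
Proof.
elim: l => [|q l IH] FG; first by rewrite !big_nil.
by rewrite !big_cons FG /= ?IH //; [move=> p pl; apply: FG; right|left].
Qed.

Lemma sumr_ge0_In l F : (forall p, List.In p l -> 0 <= F p) -> 0 <= \sum_(p <- l) F p.
Proof.
elim: l => [|q l IH] F0; first by rewrite big_nil.
by rewrite big_cons addr_ge0 ?IH //; [apply: F0; left|move=> p pl; apply: F0; right].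
Qed.

Lemma sumr_gt0_In l F p :
  (forall q, List.In q l -> 0 <= F q) -> List.In p l -> 0 < F p -> 0 < \sum_(q <- l) F q.
Proof.
elim: l => [|q l IH] //= F0 [<-|pl] Fp; rewrite big_cons.
  by rewrite ltr_wpDr // sumr_ge0_In // => q' ql; apply: F0; right.
rewrite addrC ltr_wpDr ?IH //; first by apply: F0; left.
by move=> q' ql; apply: F0; right.
Qed.

Lemma sumr_neq0_In l F : \sum_(q <- l) F q != 0 -> exists2 q, List.In q l & F q != 0.
Proof.
elim: l => [|q l IH]; first by rewrite big_nil eqxx.
rewrite big_cons; have [->|Fq _] := eqVneq (F q) 0; last by exists q; [left|].
by rewrite add0r => /IH [p pl Fp]; exists p; [right|].
Qed.

End BigIn.

Lemma In_mem_map (I : Type) (J : eqType) (f : I -> J) p l : List.In p l -> f p \in map f l.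
Proof. by elim: l => [|q l IH] //= [->|pl]; rewrite in_cons ?eqxx // IH ?orbT. Qed.

Lemma all_allpairs (I J K : Type) (P : pred K) (F : I -> J -> K) (s : seq I) (t : seq J) :
  (forall x q, List.In q t -> P (F x q)) -> all P [seq F x q | x <- s, q <- t].
Proof.
move=> PF; elim: s => //= x s IH; rewrite all_cat IH andbT all_map.
elim: t {IH} PF => //= q t IHt PF; rewrite PF /=; last by left.
by apply: IHt => x' q' q't; apply: PF; right.
Qed.

Lemma sum_indicator_seq (R : pzSemiRingType) (T : eqType) (s : seq T) (a : T) (G : T -> R) :
  uniq s -> \sum_(z <- s) (z == a)%:R * G z = (a \in s)%:R * G a.
Proof.
move=> us; have [ins|nins] := boolP (a \in s).
  rewrite (bigD1_seq a) //= eqxx mul1r big1 ?addr0 ?mul1r // => z /negbTE ->.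
  by rewrite mul0r.
rewrite mul0r big1_seq // => z /= zs; case: eqP => [za|]; last by rewrite mul0r.
by move: zs; rewrite za (negbTE nins).
Qed.

Lemma linear_form_continuous (R : realType) N (a : 'I_N -> R) :
  continuous (fun v : 'rV[R]_N => \sum_(k < N) a k * v ord0 k).
Proof.
apply: (@continuous_big _ _ +%R 0 xpredT _ _ (index_enum _)).
  exact: add_continuous.
move=> k _ v; apply: continuousM; first exact: cst_continuous.
exact: coord_continuous.
Qed.

Section FiniteSupport.
Variables (R : realType) (X : Type).
Local Notation T := {classic X}.
Implicit Types f F : X -> R.

Definition supp_seq f : seq T := fset_set (supp f).

Lemma supp_seq_uniq f : uniq (supp_seq f).
Proof. exact: fset_uniq. Qed.

Lemma mem_supp_seq f x : finite_set (supp f) -> (x \in supp_seq f) = (f x != 0).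
Proof. by move=> fin; rewrite /supp_seq in_fset_set //; apply/idP/idP; rewrite in_setE. Qed.

Lemma fsbig_supp_seq f F : finite_set (supp f) ->
  \sum_(x \in supp f) F x = \sum_(x <- supp_seq f) F x.
Proof.
move=> fin; rewrite [RHS]fsbig_seq ?supp_seq_uniq //.
suff -> : [set` supp_seq f] = supp f by [].
by apply/seteqP; split => x /=; rewrite mem_supp_seq.
Qed.

Lemma fsbig_supp_widen f (s : seq T) F : uniq s ->
  (forall x : T, f x != 0 -> x \in s) -> (forall x, f x = 0 -> F x = 0) ->
  \sum_(x \in supp f) F x = \sum_(x <- s) F x.
Proof.
move=> us fs F0; apply: fsbig_fwiden => // x [_ /=] nf.
by apply: F0; apply/eqP; apply: contra_notT nf.
Qed.

Lemma fsbig_point_mass (pi : fdist R X) s (F : X -> R) : is_point_mass pi s ->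
  \sum_(x \in supp pi) pi x * F x = F s.
Proof.
move=> pi_s; have pi_s1 : pi s = 1 by rewrite pi_s asboolT.
have -> : supp pi = [set (s : T)].
  apply/seteqP; split => x /=; last by move=> ->; rewrite /supp /= pi_s1 oner_neq0.
  by rewrite /supp /= pi_s; case: (asboolP (x = s)) => // _; rewrite eqxx.
by rewrite fsbig_set1 pi_s1 mul1r.
Qed.

End FiniteSupport.

Section Couplings.
Variables (R : realType) (X Req : Type) (cost : X -> Req -> X -> R).
Hypothesis cost_ge0 : forall x r y, 0 <= cost x r y.
Implicit Types (f g : X -> R) (gam : X -> X -> R).

Lemma coupling_cost_ge0 f g r gam : coupling f g gam -> 0 <= coupling_cost cost f r g gam.
Proof.
move=> [gam0 _ _ _]; apply: fsumr_ge0 => x _; apply: fsumr_ge0 => y _.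
exact: mulr_ge0.
Qed.

Lemma tcost_le_coupling_cost f g r gam :
  coupling f g gam -> tcost cost f r g <= coupling_cost cost f r g gam.
Proof.
move=> cg; apply: ge_inf; last by exists gam.
by exists 0 => _ [h ch <-]; exact: coupling_cost_ge0.
Qed.

Lemma coupling_costE f g r gam : finite_set (supp f) -> finite_set (supp g) ->
  coupling_cost cost f r g gam
  = \sum_(x <- supp_seq f) \sum_(y <- supp_seq g) gam x y * cost x r y.
Proof.
move=> finf fing; rewrite /coupling_cost fsbig_supp_seq //.
by apply: eq_bigr => x _; rewrite fsbig_supp_seq.
Qed.

Lemma coupling_prod f g : (forall x, 0 <= f x) -> (forall y, 0 <= g y) ->
  \sum_(x \in supp f) f x = 1 -> \sum_(y \in supp g) g y = 1 ->
  coupling f g (fun x y => f x * g y).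
Proof.
move=> f0 g0 sf sg; split.
- by move=> x y; apply: mulr_ge0.
- by move=> x y; rewrite mulf_eq0 negb_or => /andP[].
- by move=> x; rewrite -mulr_fsumr sg mulr1.
- move=> y; under eq_fsbigr do rewrite mulrC.
  by rewrite -mulr_fsumr sf mulr1.
Qed.

End Couplings.

Section OptimalCoupling.
Variables (R : realType) (X Req : Type) (cost : X -> Req -> X -> R).
Variables (f g : X -> R) (r : Req).
Hypotheses (f_ge0 : forall x, 0 <= f x)
  (f_fin : finite_set (supp f)) (g_fin : finite_set (supp g)).
Local Notation T := {classic X}.
Local Notation sf := (supp_seq f).
Local Notation sg := (supp_seq g).

(* A coupling is encoded by its values on the finitely many pairs of support points. *)
Let pairs : seq (T * T) := [seq (x, y) | x <- sf, y <- sg].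
Let N := size pairs.
Let pair_at (k : 'I_N) : T * T := tnth (in_tuple pairs) k.

Let pairs_uniq : uniq pairs.
Proof.
by apply: allpairs_uniq; rewrite ?supp_seq_uniq // => -[? ?] [? ?] _ _ [] /= -> ->.
Qed.

Let pair_at_in k : pair_at k \in pairs.
Proof. exact: mem_tnth. Qed.

Let pair_at_fst k : (pair_at k).1 \in sf.
Proof. by have /allpairsP[[a b] [/= ? ? ->]] := pair_at_in k. Qed.

Let pair_at_snd k : (pair_at k).2 \in sg.
Proof. by have /allpairsP[[a b] [/= ? ? ->]] := pair_at_in k. Qed.

Let sum_pairs (F : T -> T -> R) :
  \sum_(x <- sf) \sum_(y <- sg) F x y = \sum_(k < N) F (pair_at k).1 (pair_at k).2.
Proof.
transitivity (\sum_(z <- pairs) F z.1 z.2); first by rewrite big_allpairs.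
by rewrite (big_tnth _ _ _ xpredT).
Qed.

Let sum_indicator1 (s : seq T) (a : T) : uniq s -> a \in s -> \sum_(z <- s) (a == z)%:R = 1 :> R.
Proof.
move=> us ins; under eq_bigr do rewrite eq_sym -[_%:R]mulr1.
by rewrite sum_indicator_seq // ins mul1r.
Qed.

Let coupling_of_vec (v : 'rV[R]_N) (x y : X) : R :=
  \sum_(k < N) (pair_at k == ((x : T), (y : T)))%:R * v ord0 k.
Let vec_of_coupling (h : X -> X -> R) : 'rV[R]_N :=
  \row_(k < N) h (pair_at k).1 (pair_at k).2.
Let marginal1 x (v : 'rV[R]_N) := \sum_(k < N) ((pair_at k).1 == (x : T))%:R * v ord0 k.
Let marginal2 y (v : 'rV[R]_N) := \sum_(k < N) ((pair_at k).2 == (y : T))%:R * v ord0 k.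
Let lin_cost (v : 'rV[R]_N) := \sum_(k < N) cost (pair_at k).1 r (pair_at k).2 * v ord0 k.

Let sum_coupling_of_vec1 v x : \sum_(y <- sg) coupling_of_vec v x y = marginal1 x v.
Proof.
rewrite exchange_big; apply: eq_bigr => k _ /=; rewrite -big_distrl /=; congr (_ * _).
move: (pair_at_snd k); case: (pair_at k) => a b /= bg.
have [->|nax] := eqVneq a x.
  by under eq_bigr do rewrite xpair_eqE eqxx; rewrite sum_indicator1 ?supp_seq_uniq.
by rewrite big1 // => y _; rewrite xpair_eqE (negbTE nax).
Qed.

Let sum_coupling_of_vec2 v y : \sum_(x <- sf) coupling_of_vec v x y = marginal2 y v.
Proof.
rewrite exchange_big; apply: eq_bigr => k _ /=; rewrite -big_distrl /=; congr (_ * _).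
move: (pair_at_fst k); case: (pair_at k) => a b /= af.
have [->|nby] := eqVneq b y.
  by under eq_bigr do rewrite xpair_eqE eqxx andbT; rewrite sum_indicator1 ?supp_seq_uniq.
by rewrite big1 // => x _; rewrite xpair_eqE (negbTE nby) andbF.
Qed.

Let sum_pair_at_indicator (G : 'I_N -> R) k :
  \sum_(j < N) (pair_at j == pair_at k)%:R * G j = G k.
Proof.
rewrite (bigD1 k) //= eqxx mul1r big1 ?addr0 // => j jk.
by rewrite (inj_eq (tuple_uniqP (in_tuple pairs) pairs_uniq)) (negbTE jk) mul0r.
Qed.

Let coupling_cost_of_vec v : coupling_cost cost f r g (coupling_of_vec v) = lin_cost v.
Proof.
rewrite coupling_costE //.
transitivity (\sum_(x <- sf) \sum_(y <- sg) \sum_(k < N)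
   (pair_at k == ((x : T), (y : T)))%:R * cost x r y * v ord0 k).
  apply: eq_bigr => x _; apply: eq_bigr => y _.
  by rewrite big_distrl; apply: eq_bigr => k _; rewrite mulrAC.
rewrite sum_pairs exchange_big /=; apply: eq_bigr => k _.
under eq_bigr do rewrite -surjective_pairing eq_sym -mulrA.
exact: sum_pair_at_indicator.
Qed.

Let lin_cost_of_coupling h :
  lin_cost (vec_of_coupling h) = coupling_cost cost f r g h.
Proof. by rewrite coupling_costE // sum_pairs; apply: eq_bigr => k _; rewrite mxE mulrC. Qed.

Let marginal1_of_coupling h x : coupling f g h -> marginal1 x (vec_of_coupling h) = f x.
Proof.
move=> [_ _ hf _]; rewrite /marginal1.
under eq_bigr do rewrite mxE.
rewrite -(sum_pairs (fun a b => (a == (x : T))%:R * h a b)).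
under eq_bigr do rewrite -big_distrr /=.
rewrite sum_indicator_seq ?supp_seq_uniq // -(@fsbig_supp_seq _ _ g (h x)) // hf.
by rewrite mem_supp_seq //; have [->|] := eqVneq (f x) 0; rewrite ?mulr0 ?mul1r.
Qed.

Let marginal2_of_coupling h y : coupling f g h -> marginal2 y (vec_of_coupling h) = g y.
Proof.
move=> [_ _ _ hg]; rewrite /marginal2.
under eq_bigr do rewrite mxE.
rewrite -(sum_pairs (fun a b => (b == (y : T))%:R * h a b)) exchange_big /=.
under eq_bigr do rewrite -big_distrr /=.
rewrite sum_indicator_seq ?supp_seq_uniq // -(@fsbig_supp_seq _ _ f (h^~ y)) // hg.
by rewrite mem_supp_seq //; have [->|] := eqVneq (g y) 0; rewrite ?mulr0 ?mul1r.
Qed.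

Let feasible : set 'rV[R]_N :=
  (\bigcap_(k in setT) (fun v : 'rV[R]_N => v ord0 k) @^-1` `[0, \sum_(x <- sf) f x]%classic) `&`
  (\bigcap_(x in setT) marginal1 x @^-1` [set f x]) `&`
  (\bigcap_(y in setT) marginal2 y @^-1` [set g y]).

Let feasible_compact : compact feasible.
Proof.
have closed_feasible : closed feasible.
  apply: closedI; [apply: closedI|].
  - apply: closed_bigI => k _; apply: preimage_closed; last exact: interval_closed.
    by move=> v _; apply: (@coord_continuous R 1 N ord0 k).
  - apply: closed_bigI => x _; apply: preimage_closed; last exact: closed_eq.
    by move=> v _; apply: linear_form_continuous.
  - apply: closed_bigI => y _; apply: preimage_closed; last exact: closed_eq.
    by move=> v _; apply: linear_form_continuous.
apply: (subclosed_compact closed_feasible (rV_compact (fun _ : 'I_N => @segment_compact R 0 (\sum_(x <- sf) f x)))).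
by move=> v [[bound _] _] k; apply: bound.
Qed.

Let vec_of_coupling_feasible h : coupling f g h -> feasible (vec_of_coupling h).
Proof.
move=> ch; split; [split|]; last 2 first.
- by move=> x _; apply: marginal1_of_coupling.
- by move=> y _; apply: marginal2_of_coupling.
move=> k _; have [h0 _ hf _] := ch.
rewrite /= in_itv /= mxE h0 /=; apply: (le_trans (y := f (pair_at k).1)).
  rewrite -hf fsbig_supp_seq // (bigD1_seq (pair_at k).2) ?supp_seq_uniq //= lerDl.
  exact: sumr_ge0.
rewrite (bigD1_seq (pair_at k).1) ?supp_seq_uniq //= lerDl.
exact: sumr_ge0.
Qed.

Let coupling_of_feasible v : feasible v -> coupling f g (coupling_of_vec v).
Proof.
move=> [[bound m1] m2]; split.
- move=> x y; apply: sumr_ge0 => k _; apply: mulr_ge0 => //.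
  by have := bound k I; rewrite /= in_itv /= => /andP[].
- move=> x y; have [/allpairsP [[a b] [/= af bg [-> ->]]] _|nP] :=
    boolP (((x : T), (y : T)) \in pairs).
    by split; [move: af|move: bg]; rewrite mem_supp_seq.
  move=> /eqP[]; rewrite /coupling_of_vec big1 // => k _.
  by case: eqP => [kxy|]; [move: nP; rewrite -kxy pair_at_in|rewrite mul0r].
- by move=> x; rewrite fsbig_supp_seq // sum_coupling_of_vec1; apply: m1.
- by move=> y; rewrite fsbig_supp_seq // sum_coupling_of_vec2; apply: m2.
Qed.

Hypothesis cost_ge0 : forall x r y, 0 <= cost x r y.

Lemma optimal_coupling_exists : (exists gam, coupling f g gam) ->
  exists2 gam, coupling f g gam & coupling_cost cost f r g gam = tcost cost f r g.
Proof.
move=> [gam0 cgam0].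
have feasible0 : feasible !=set0.
  by exists (vec_of_coupling gam0); apply: vec_of_coupling_feasible.
have lin_cost_cont : continuous lin_cost by apply: linear_form_continuous.
have [v /[!in_setE] vK vmin] :=
  EVT_min_rV feasible0 feasible_compact (continuous_subspaceT lin_cost_cont).
exists (coupling_of_vec v); first exact: coupling_of_feasible.
apply/eqP; rewrite eq_le (tcost_le_coupling_cost cost_ge0 _ (coupling_of_feasible vK)) andbT.
rewrite coupling_cost_of_vec; apply: lb_le_inf.
  by exists (coupling_cost cost f r g gam0), gam0.
move=> _ [h ch <-]; rewrite -lin_cost_of_coupling; apply: vmin.
by rewrite in_setE; apply: vec_of_coupling_feasible.
Qed.

End OptimalCoupling.

Section Mixture.
Variables (R : realType) (X M : Type).
Implicit Types (l : seq (R * (fdist R X * M))) (k : fdist R X * M).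

Definition weights_valid l := all (fun p => 0 < p.1) l /\ \sum_(p <- l) p.1 = 1.

Lemma mix_ge0 l x : all (fun p => 0 < p.1) l -> 0 <= mix l x.
Proof.
move=> l_pos; apply: sumr_ge0_In => p pl; apply: mulr_ge0; last exact: fmass_ge0.
exact/ltW/(all_In l_pos pl).
Qed.

Lemma mix_neq0 l p x :
  all (fun p => 0 < p.1) l -> List.In p l -> fmass p.2.1 x != 0 -> mix l x != 0.
Proof.
move=> l_pos pl px; rewrite gt_eqF // (sumr_gt0_In _ pl) //.
  move=> q ql; apply: mulr_ge0; [exact/ltW/(all_In l_pos ql)|exact: fmass_ge0].
by rewrite mulr_gt0 ?(all_In l_pos pl) // lt_neqAle eq_sym px fmass_ge0.
Qed.

Lemma mix_neq0_In l x : mix l x != 0 -> exists2 p, List.In p l & fmass p.2.1 x != 0.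
Proof.
by move=> /sumr_neq0_In [p pl]; rewrite mulf_eq0 negb_or => /andP[_ px]; exists p.
Qed.

Lemma mix_supp_finite l : finite_set (supp (mix l)).
Proof.
apply: (@sub_finite_set _ _ [set` flatten [seq supp_seq (fmass p.2.1) | p <- l]]) => //.
move=> x /= /mix_neq0_In [p pl px]; apply/flattenP.
exists (supp_seq (fmass p.2.1)); first exact: In_mem_map.
by rewrite mem_supp_seq //; exact: fmass_fin.
Qed.

Lemma mix_sum1 l : weights_valid l -> \sum_(x \in supp (mix l)) mix l x = 1.
Proof.
move=> [l_pos l_sum1]; rewrite fsbig_supp_seq; last exact: mix_supp_finite.
rewrite /mix exchange_big /= -l_sum1; apply: eq_big_In => p pl.
rewrite -big_distrr /= -[RHS]mulr1; congr (_ * _).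
rewrite -(fmass_sum1 p.2.1); apply/esym/fsbig_supp_widen => //.
- exact: supp_seq_uniq.
- move=> x px; rewrite mem_supp_seq; [exact: (mix_neq0 l_pos pl px)|exact: mix_supp_finite].
Qed.

Lemma weights_valid_unit k : weights_valid [:: (1, k)].
Proof. by split; rewrite /= ?ltr01 // big_cons big_nil addr0. Qed.

Lemma mix_unit k : mix [:: (1, k)] = fmass k.1.
Proof. by apply/funext => x; rewrite /mix big_cons big_nil mul1r addr0. Qed.

Definition mix_fdist l (vl : weights_valid l) : fdist R X :=
  @FDist R X (mix l) (fun x => mix_ge0 x vl.1) (mix_supp_finite l) (mix_sum1 vl).

End Mixture.

Section OptimalStep.
Variables (R : realType) (X Req : Type) (cost : X -> Req -> X -> R).
Hypothesis cost_ge0 : forall x r y, 0 <= cost x r y.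
Variables (M : Type) (step : fdist R X * M -> Req -> seq (R * (fdist R X * M))).
Hypothesis step_valid : mixed_valid step.

Definition opt_coupling (f : X -> R) r (g : X -> R) : X -> X -> R :=
  match pselect (exists2 h, coupling f g h & coupling_cost cost f r g h = tcost cost f r g) with
  | left H => s2val (cid2 H)
  | right _ => fun _ _ => 0
  end.

Definition step_coupling k r := opt_coupling (fmass k.1) r (mix (step k r)).

Lemma step_couplingP k r :
  coupling (fmass k.1) (mix (step k r)) (step_coupling k r) /\
  coupling_cost cost (fmass k.1) r (mix (step k r)) (step_coupling k r)
    = tcost cost (fmass k.1) r (mix (step k r)).
Proof.
have [kr_pos kr_sum1] := step_valid k r.
have : exists2 h, coupling (fmass k.1) (mix (step k r)) h &
  coupling_cost cost (fmass k.1) r (mix (step k r)) h = tcost cost (fmass k.1) r (mix (step k r)).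
  apply: optimal_coupling_exists => //; [exact: fmass_ge0|exact: fmass_fin|exact: mix_supp_finite|].
  exists (fun x y => fmass k.1 x * mix (step k r) y); apply: coupling_prod.
  - exact: fmass_ge0.
  - by move=> y; apply: mix_ge0.
  - exact: fmass_sum1.
  - exact: mix_sum1.
by rewrite /step_coupling /opt_coupling; case: pselect => // H _; case: (cid2 H).
Qed.

End OptimalStep.

Section BehavioralOfMixed.
Variables (R : realType) (X Req : Type) (cost : X -> Req -> X -> R).
Hypothesis cost_ge0 : forall x r y, 0 <= cost x r y.
Variables (M : Type) (step : fdist R X * M -> Req -> seq (R * (fdist R X * M))).
Hypothesis step_valid : mixed_valid step.
Local Notation coupling_at := (step_coupling cost step).
Implicit Types (k : fdist R X * M) (q : R * (fdist R X * M)).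

(* Bayes' rule: the probability that A chose the subsequent state q given that
   the point of the mixture reached is y. *)
Definition posterior k r (y : X) q : R := q.1 * fmass q.2.1 y / mix (step k r) y.

(* Positions outside the support of the current
   distribution are never reached; there the algorithm just stays put. *)
Definition behavioral_of_mixed (x : X) k r : seq (R * (X * (fdist R X * M))) :=
  if fmass k.1 x != 0 then
    [seq (coupling_at k r x y / fmass k.1 x * posterior k r y q, ((y : X), q.2))
      | y <- supp_seq (mix (step k r)), q <- step k r]
  else [:: (1, (x, k))].

Lemma sum_posterior k r y :
  mix (step k r) y != 0 -> \sum_(q <- step k r) posterior k r y q = 1.
Proof. by move=> ky; rewrite -big_distrl /= mulfV. Qed.

Lemma mix_mul_posterior k r y q :
  mix (step k r) y != 0 -> mix (step k r) y * posterior k r y q = q.1 * fmass q.2.1 y.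
Proof. by move=> ky; rewrite mulrCA mulfV ?mulr1. Qed.

Lemma behavioral_of_mixed_valid : behavioral_valid behavioral_of_mixed.
Proof.
move=> x k r; rewrite /behavioral_of_mixed.
have [fx|_] := ifPn; last by rewrite /= ler01 big_cons big_nil addr0.
have [[c0 _ cm _] _] := step_couplingP cost_ge0 step_valid k r.
have [kr_pos _] := step_valid k r.
have krfin := mix_supp_finite (step k r).
split.
  apply: all_allpairs => y q ql /=; apply: mulr_ge0; apply: mulr_ge0 => //.
  - by rewrite invr_ge0 fmass_ge0.
  - by apply: mulr_ge0; [exact/ltW/(all_In kr_pos ql)|exact: fmass_ge0].
  - by rewrite invr_ge0 mix_ge0.
rewrite big_allpairs_dep /= (eq_big_seq (fun y : {classic X} => coupling_at k r x y / fmass k.1 x)).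
  by rewrite -big_distrl /= -fsbig_supp_seq // cm mulfV.
move=> y; rewrite mem_supp_seq // => ky.
by rewrite -big_distrr /= sum_posterior ?mulr1.
Qed.

Lemma behavioral_of_mixed_sum x k r (G : X * (fdist R X * M) -> R) :
  fmass k.1 x != 0 ->
  fmass k.1 x * \sum_(p <- behavioral_of_mixed x k r) p.1 * G p.2 =
  \sum_(y <- supp_seq (mix (step k r))) \sum_(q <- step k r)
     coupling_at k r x y * posterior k r y q * G (y, q.2).
Proof.
move=> fx; rewrite /behavioral_of_mixed fx big_allpairs_dep /= big_distrr.
apply: eq_bigr => y _ /=; rewrite big_distrr; apply: eq_bigr => q _ /=.
by rewrite !mulrA [fmass k.1 x * _]mulrC mulfK.
Qed.

Lemma behavioral_of_mixed_ecost rho k :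
  \sum_(x \in supp (fmass k.1)) fmass k.1 x * behavioral_ecost cost behavioral_of_mixed rho x k
  = mixed_ecost cost step rho k.
Proof.
elim: rho k => [|r rho IH] k /=; first by rewrite fsbig1 // => x _; rewrite mulr0.
have [[_ _ _ cm2] copt] := step_couplingP cost_ge0 step_valid k r.
have [kr_pos _] := step_valid k r.
have kfin := fmass_fin k.1.
have krfin : finite_set (supp (mix (step k r))) := mix_supp_finite _.
pose B := behavioral_ecost cost behavioral_of_mixed rho.
rewrite fsbig_supp_seq //.
rewrite (eq_big_seq (fun x : {classic X} => \sum_(y <- supp_seq (mix (step k r))) \sum_(q <- step k r)
    (coupling_at k r x y * posterior k r y q * cost x r y +
     coupling_at k r x y * posterior k r y q * B y q.2))); last first.
  move=> x; rewrite mem_supp_seq // => kx.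
  rewrite (behavioral_of_mixed_sum _ (fun z => cost x r z.1 + B z.1 z.2)) //.
  by apply: eq_bigr => y _; apply: eq_bigr => q _; rewrite mulrDr.
under eq_bigr do under eq_bigr do rewrite big_split.
under eq_bigr do rewrite big_split.
rewrite big_split /=; congr (_ + _).
  rewrite -copt coupling_costE //; apply: eq_bigr => x _; apply: eq_big_seq => y.
  rewrite mem_supp_seq // => ky.
  by rewrite -big_distrl -big_distrr /= sum_posterior // mulr1.
rewrite exchange_big /=.
under eq_bigr do rewrite exchange_big /=.
rewrite exchange_big /=; apply: eq_big_In => q ql.
rewrite -(IH q.2) (@fsbig_supp_widen _ _ _ (supp_seq (mix (step k r)))) ?big_distrr /=.
- apply: eq_big_seq => y; rewrite mem_supp_seq // => ky.
  rewrite -!big_distrl /= -fsbig_supp_seq // cm2.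
  by rewrite mix_mul_posterior // mulrA.
- exact: supp_seq_uniq.
- by move=> y qy; rewrite mem_supp_seq //; apply: (mix_neq0 kr_pos ql qy).
- by move=> y ->; rewrite mul0r.
Qed.

End BehavioralOfMixed.

Section DistributionalOfMixed.
Variables (R : realType) (X Req : Type) (cost : X -> Req -> X -> R).
Hypothesis cost_ge0 : forall x r y, 0 <= cost x r y.
Variables (M : Type) (step : fdist R X * M -> Req -> seq (R * (fdist R X * M))).
Hypothesis step_valid : mixed_valid step.
Local Notation coupling_at := (step_coupling cost step).
Implicit Types (L : seq (R * (fdist R X * M))) (w : R * (fdist R X * M)).

Definition next_weights L r : seq (R * (fdist R X * M)) :=
  flatten [seq [seq (w.1 * p.1, p.2) | p <- step w.2 r] | w <- L].

Lemma sum_next_weights L r (F : R * (fdist R X * M) -> R) :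
  \sum_(p <- next_weights L r) F p = \sum_(w <- L) \sum_(p <- step w.2 r) F (w.1 * p.1, p.2).
Proof. by rewrite big_flatten big_map; apply: eq_bigr => w _; rewrite big_map. Qed.

Lemma mix_next_weights L r x :
  mix (next_weights L r) x = \sum_(w <- L) w.1 * mix (step w.2 r) x.
Proof.
rewrite /mix sum_next_weights; apply: eq_bigr => w _; rewrite big_distrr /=.
by apply: eq_bigr => p _; rewrite mulrA.
Qed.

Lemma next_weights_valid L r : weights_valid L -> weights_valid (next_weights L r).
Proof.
move=> [L_pos L_sum1]; split.
  elim: L L_pos {L_sum1} => //= w L IH /andP[w_pos L_pos].
  rewrite all_cat IH // andbT all_map.
  by apply: sub_all (proj1 (step_valid w.2 r)) => p /= p_pos; apply: mulr_gt0.
rewrite sum_next_weights -L_sum1; apply: eq_bigr => w _ /=.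
by rewrite -big_distrr /= (proj2 (step_valid w.2 r)) mulr1.
Qed.

Section MixCoupling.
Variables (L : seq (R * (fdist R X * M))) (r : Req).
Hypothesis L_valid : weights_valid L.
Local Notation L' := (next_weights L r).

Let L_pos : all (fun p => 0 < p.1) L := L_valid.1.

Let coupling_at_neq0 w x y :
  coupling_at w.2 r x y != 0 -> fmass w.2.1 x != 0 /\ mix (step w.2 r) y != 0.
Proof. by have [[_ csupp _ _] _] := step_couplingP cost_ge0 step_valid w.2 r; apply: csupp. Qed.

Let fsbig_supp_widen_fst w (F : X -> R) : List.In w L ->
  (forall x, fmass w.2.1 x = 0 -> F x = 0) ->
  \sum_(x \in supp (fmass w.2.1)) F x = \sum_(x <- supp_seq (mix L)) F x.
Proof.
move=> wL F0; apply: fsbig_supp_widen => //; first exact: supp_seq_uniq.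
move=> x wx; rewrite mem_supp_seq; [exact: (mix_neq0 L_pos wL wx)|exact: mix_supp_finite].
Qed.

Let mix_next_weights_neq0 w y :
  List.In w L -> mix (step w.2 r) y != 0 -> mix L' y != 0.
Proof.
move=> wL wy; rewrite mix_next_weights gt_eqF //.
have w_pos q : List.In q L -> 0 < q.1 by move=> qL; apply: (all_In L_pos qL).
have step_pos q : all (fun p => 0 < p.1) (step q.2 r) by case: (step_valid q.2 r).
apply: (sumr_gt0_In _ wL); first by move=> q qL; rewrite mulr_ge0 ?mix_ge0 ?(ltW (w_pos q qL)).
by rewrite mulr_gt0 ?w_pos // lt_neqAle eq_sym wy mix_ge0.
Qed.

Let fsbig_supp_widen_snd w (F : X -> R) : List.In w L ->
  (forall y, mix (step w.2 r) y = 0 -> F y = 0) ->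
  \sum_(y \in supp (mix (step w.2 r))) F y = \sum_(y <- supp_seq (mix L')) F y.
Proof.
move=> wL F0; apply: fsbig_supp_widen => //; first exact: supp_seq_uniq.
move=> y wy; rewrite mem_supp_seq; [exact: (mix_next_weights_neq0 wL wy)|exact: mix_supp_finite].
Qed.

Let coupling_at_eq0_fst w x y : fmass w.2.1 x = 0 -> coupling_at w.2 r x y = 0.
Proof. by move=> wx; apply/eqP; apply: contraT => /coupling_at_neq0 []; rewrite wx eqxx. Qed.

Let coupling_at_eq0_snd w x y : mix (step w.2 r) y = 0 -> coupling_at w.2 r x y = 0.
Proof. by move=> wy; apply/eqP; apply: contraT => /coupling_at_neq0 [_]; rewrite wy eqxx. Qed.

Definition mix_coupling x y := \sum_(w <- L) w.1 * coupling_at w.2 r x y.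

Lemma coupling_mix_coupling : coupling (mix L) (mix L') mix_coupling.
Proof.
have spec w := step_couplingP cost_ge0 step_valid w.2 r.
have finL := mix_supp_finite L; have finL' := mix_supp_finite L'.
split.
- move=> x y; apply: sumr_ge0_In => w wL; apply: mulr_ge0; first exact/ltW/(all_In L_pos wL).
  by have [[c0 _ _ _] _] := spec w; apply: c0.
- move=> x y /sumr_neq0_In [w wL]; rewrite mulf_eq0 negb_or => /andP[_ /coupling_at_neq0 [wx wy]].
  by split; [exact: (mix_neq0 L_pos wL wx)|exact: (mix_next_weights_neq0 wL wy)].
- move=> x; rewrite fsbig_supp_seq // /mix_coupling exchange_big /=.
  apply: eq_big_In => w wL; rewrite -big_distrr /=; congr (_ * _).
  have [[_ _ cm1 _] _] := spec w.
  by rewrite -cm1 (fsbig_supp_widen_snd wL) // => y; apply: coupling_at_eq0_snd.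
- move=> y; rewrite fsbig_supp_seq // /mix_coupling exchange_big /= mix_next_weights.
  apply: eq_big_In => w wL; rewrite -big_distrr /=; congr (_ * _).
  have [[_ _ _ cm2] _] := spec w.
  by rewrite -cm2 (fsbig_supp_widen_fst wL) // => x; apply: coupling_at_eq0_fst.
Qed.

Lemma coupling_cost_mix_coupling :
  coupling_cost cost (mix L) r (mix L') mix_coupling
  = \sum_(w <- L) w.1 * tcost cost (fmass w.2.1) r (mix (step w.2 r)).
Proof.
rewrite coupling_costE; [|exact: mix_supp_finite..].
transitivity (\sum_(w <- L) w.1 * \sum_(x <- supp_seq (mix L)) \sum_(y <- supp_seq (mix L'))
                coupling_at w.2 r x y * cost x r y).
  transitivity (\sum_(x <- supp_seq (mix L)) \sum_(y <- supp_seq (mix L')) \sum_(w <- L)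
                  w.1 * (coupling_at w.2 r x y * cost x r y)).
    apply: eq_bigr => x _; apply: eq_bigr => y _; rewrite big_distrl.
    by apply: eq_bigr => w _; rewrite mulrA.
  under eq_bigr do rewrite exchange_big.
  rewrite exchange_big; apply: eq_bigr => w _; rewrite big_distrr; apply: eq_bigr => x _.
  by rewrite big_distrr.
apply: eq_big_In => w wL; congr (_ * _).
have [_ <-] := step_couplingP cost_ge0 step_valid w.2 r.
rewrite /coupling_cost (fsbig_supp_widen_fst wL); last first.
  by move=> x wx; apply: fsbig1 => y _; rewrite coupling_at_eq0_fst // mul0r.
apply: eq_bigr => x _; rewrite (fsbig_supp_widen_snd wL) // => y wy.
by rewrite coupling_at_eq0_snd // mul0r.
Qed.

Lemma tcost_mix_le : tcost cost (mix L) r (mix L')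
  <= \sum_(w <- L) w.1 * tcost cost (fmass w.2.1) r (mix (step w.2 r)).
Proof.
rewrite -coupling_cost_mix_coupling.
exact: tcost_le_coupling_cost coupling_mix_coupling.
Qed.

End MixCoupling.

Definition valid_weights := {L : seq (R * (fdist R X * M)) | weights_valid L}.

(* The distributional algorithm remembers the weighted list of all full states of
   A and always sits at their mixture. *)
Definition distributional_of_mixed (_ : fdist R X) (L : valid_weights) r
    : fdist R X * valid_weights :=
  let L'_valid := next_weights_valid r (svalP L) in
  (mix_fdist L'_valid, exist _ _ L'_valid).

Lemma distributional_of_mixed_cost rho pi (L : valid_weights) : fmass pi = mix (sval L) ->
  distributional_cost cost distributional_of_mixed rho pi L
  <= \sum_(w <- sval L) w.1 * mixed_ecost cost step rho w.2.
Proof.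
elim: rho pi L => [|r rho IH] pi [L L_valid] /= piL.
  by rewrite big1 // => w _; rewrite mulr0.
rewrite piL; apply: le_trans (lerD (tcost_mix_le r L_valid) (IH _ _ _)) _ => //=.
rewrite sum_next_weights -big_split /=; apply: ler_sum => w _ /=.
rewrite mulrDr big_distrr /= lerD2l; apply: ler_sum => p _.
by rewrite mulrA.
Qed.

End DistributionalOfMixed.

Section DeterministicOfBehavioral.
Variables (R : realType) (X Req : Type) (cost : X -> Req -> X -> R).
Hypothesis cost_ge0 : forall x r y, 0 <= cost x r y.
Variables (M : Type) (bstep : X -> M -> Req -> seq (R * (X * M))).
Hypothesis bstep_valid : behavioral_valid bstep.
Local Notation mu := (@lebesgue_measure R).

(* A simulation state is a state (x, m) of the behavioral algorithm together with
   the interval [c, c + len) of uniform samples u that lead to it. *)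
Local Notation sim_state := ((X * M) * R * R)%type.

Fixpoint select_branch (l : seq (R * (X * M))) (c len u : R) (d : sim_state) : sim_state :=
  if l is (p, y) :: l' then
    if (c <= u) && (u < c + p * len) then (y, c, p * len)
    else select_branch l' (c + p * len) len u d
  else d.

Definition sim_step (st : sim_state) r u : sim_state :=
  select_branch (bstep st.1.1.1 st.1.1.2 r) st.1.2 st.2 u st.

Fixpoint sim_cost (rho : seq Req) (st : sim_state) (u : R) : R :=
  if rho is r :: rho' then
    cost st.1.1.1 r (sim_step st r u).1.1.1 + sim_cost rho' (sim_step st r u) u
  else 0.

Definition det_of_behavioral (st0 : sim_state) (u : R) (h : seq Req) : X :=
  (foldl (fun st r => sim_step st r u) st0 h).1.1.1.

Lemma det_cost_from_sim st0 u h rho :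
  det_cost_from cost (det_of_behavioral st0 u) h rho
  = sim_cost rho (foldl (fun st r => sim_step st r u) st0 h) u.
Proof. by elim: rho h => [|r rho IH] h //=; rewrite IH /det_of_behavioral foldl_rcons. Qed.

Lemma sim_cost_ge0 rho st u : 0 <= sim_cost rho st u.
Proof. by elim: rho st => [|r rho IH] st //=; rewrite addr_ge0. Qed.

Lemma measurable_select_branch (G : sim_state -> R -> R) l c len d :
  (forall st, measurable_fun setT (G st)) ->
  measurable_fun setT (fun u => G (select_branch l c len u d) u).
Proof.
move=> mG; elim: l c => [|[p y] l IH] c //=.
rewrite (_ : (fun u => _) = (fun u => if (c <= u) && (u < c + p * len)
    then G (y, c, p * len) u else G (select_branch l (c + p * len) len u d) u)).
  apply: measurable_fun_ifT => //; apply: measurable_and.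
    exact: measurable_fun_ler.
  exact: measurable_fun_ltr.
by apply/funext => u; case: ifP.
Qed.

Lemma measurable_sim_cost rho st : measurable_fun setT (sim_cost rho st).
Proof.
elim: rho st => [|r rho IH] st /=; first exact: measurable_cst.
apply: (measurable_select_branch (G := fun st' u => cost st.1.1.1 r st'.1.1.1 + sim_cost rho st' u)).
by move=> st'; apply: measurable_funD => //; exact: IH.
Qed.

(* Integrating over the interval of a state splits into the subintervals of its
   branches, each of length proportional to the branch probability. *)
Lemma integral_select_branch (G : sim_state -> R -> R) (H : X * M -> R) l c len d :
  (forall st, measurable_fun setT (G st)) -> (forall st u, 0 <= G st u) ->
  (forall y c' len', 0 <= len' ->
     (\int[mu]_(u in `[c', (c' + len')%R[) (G (y, c', len') u)%:E = (len' * H y)%:E)%E) ->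
  0 <= len -> all (fun p => 0 <= p.1) l ->
  (\int[mu]_(u in `[c, (c + (\sum_(p <- l) p.1) * len)%R[) (G (select_branch l c len u d) u)%:E
   = ((\sum_(p <- l) p.1 * H p.2) * len)%:E)%E.
Proof.
move=> mG G0 GH len0; elim: l c => [|[p y] l IH] c /=.
  by rewrite !big_nil mul0r addr0 set_itvco0 integral_set0.
move=> /andP [p0 l0]; rewrite !big_cons /=.
have pl0 : 0 <= p * len by apply: mulr_ge0.
have sl0 : 0 <= (\sum_(q <- l) q.1) * len.
  by apply: mulr_ge0 => //; apply: sumr_ge0_In => q ql; exact: (all_In l0 ql).
rewrite (_ : `[c, c + (p + \sum_(q <- l) q.1) * len[%classic = `[c, c + p * len[%classic `|`
    `[c + p * len, c + p * len + (\sum_(q <- l) q.1) * len[%classic); last first.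
  apply/seteqP; split => u /=; rewrite !in_itv /=.
    move=> /andP[cu uc]; case: (ltP u (c + p * len)) => h; [left|right].
      by apply/andP; split; lra.
    by apply/andP; split; lra.
  by move=> [/andP[cu uc]|/andP[cu uc]]; apply/andP; split; lra.
rewrite ge0_integral_setU //; last 3 first.
- apply/measurable_EFinP; apply: measurable_funTS.
  exact: (measurable_select_branch ((p, y) :: l) c len d mG).
- by move=> u _; rewrite lee_fin.
- by apply/disj_setPS => u [] /=; rewrite !in_itv /= => /andP[_ h1] /andP[h2 _]; lra.
rewrite mulrDl EFinD; congr (_ + _)%E; last first.
  rewrite -(IH (c + p * len)) //; apply: eq_integral => u /set_mem /=.
  rewrite in_itv /= => /andP[h1 h2].
  by rewrite ifF //; apply/negbTE; rewrite negb_and -!ltNge; apply/orP; right; lra.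
rewrite mulrAC -(GH y c) //; apply: eq_integral => u /set_mem /=.
by rewrite in_itv /= => cu; rewrite ifT.
Qed.

Lemma integral_sim_cost rho st : 0 <= st.2 ->
  (\int[mu]_(u in `[st.1.2, (st.1.2 + st.2)%R[) (sim_cost rho st u)%:E
     = (st.2 * behavioral_ecost cost bstep rho st.1.1.1 st.1.1.2)%:E)%E.
Proof.
elim: rho st => [|r rho IH] [[[x m] c] len] /= len0; first by rewrite mulr0 integral0.
have [bpos bsum1] := bstep_valid x m r.
pose G st' u := cost x r st'.1.1.1 + sim_cost rho st' u.
pose H (y : X * M) := cost x r y.1 + behavioral_ecost cost bstep rho y.1 y.2.
have mG st' : measurable_fun setT (G st').
  by apply: measurable_funD => //; exact: measurable_sim_cost.
have G0 st' u : 0 <= G st' u by rewrite addr_ge0 ?sim_cost_ge0.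
have GH y c' len' : 0 <= len' ->
    (\int[mu]_(u in `[c', (c' + len')%R[) (G (y, c', len') u)%:E = (len' * H y)%:E)%E.
  move=> len'0; under eq_integral do rewrite EFinD.
  rewrite ge0_integralD //; last 3 first.
  - by move=> u _; rewrite lee_fin.
  - by move=> u _; rewrite lee_fin sim_cost_ge0.
  - by apply/measurable_EFinP/measurable_funTS; exact: measurable_sim_cost.
  rewrite integral_cst //= (IH (y, c', len')) //= lebesgue_measure_itv /=.
  case: ifPn => [_|]; last first.
    rewrite -leNgt => len'_le0.
    have -> : len' = 0 by apply/le_anti; rewrite len'0 andbT -(lerD2l c') addr0.
    by rewrite mule0 add0e !mul0r.
  by rewrite -EFinD addrAC subrr add0r /H mulrDr [cost x r y.1 * _]mulrC.
have := integral_select_branch c (((x, m), c), len) mG G0 GH len0 bpos.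
by rewrite bsum1 mul1r => ->; rewrite mulrC.
Qed.

Lemma det_of_behavioral_cost (s0 : X) (m0 : M) rho :
  measurable_fun setT (fun u => det_cost cost (det_of_behavioral (s0, m0, 0, 1) u) rho) /\
  (\int[uniform_prob (@ltr01 R)]_u (det_cost cost (det_of_behavioral (s0, m0, 0, 1) u) rho)%:E
     = (behavioral_ecost cost bstep rho s0 m0)%:E)%E.
Proof.
have detE u : det_cost cost (det_of_behavioral (s0, m0, 0, 1) u) rho
              = sim_cost rho (s0, m0, 0, 1) u.
  exact: det_cost_from_sim _ _ [::] _.
have msim := measurable_sim_cost rho (s0, m0, 0, 1).
split; first by rewrite (funext detE).
under eq_integral do rewrite detE.
rewrite integral_uniform //; last 2 first.
- exact/measurable_EFinP.
- by move=> u; rewrite lee_fin sim_cost_ge0.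
rewrite subr0 invr1 mul1e -integral_itv_bndo_bndc; last exact/measurable_EFinP/measurable_funTS.
by have := integral_sim_cost rho (st := (s0, m0, 0, 1)) ler01; rewrite /= add0r mul1r.
Qed.

End DeterministicOfBehavioral.

Theorem mainTheorem2 (R : realType) (X Req : Type) (s0 : X)
  (dist : X -> X -> R) (cost : X -> Req -> X -> R)
  (dist_ge0 : forall x y, 0 <= dist x y)
  (dist_refl : forall x, dist x x = 0)
  (dist_tri : forall x y z, dist x z <= dist x y + dist y z)
  (cost_ge0 : forall x r y, 0 <= cost x r y)
  (cost_dist : forall u x y v r, cost u r v <= dist u x + cost x r y + dist y v)
  (* the mixed online algorithm A *)
  (M : Type) (m0 : M) (pi0 : fdist R X) (pi0_s0 : is_point_mass pi0 s0)
  (step : fdist R X * M -> Req -> seq (R * (fdist R X * M)))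
  (step_valid : mixed_valid step) :
  (* (1) a probability distribution over deterministic online algorithms *)
  (exists (d : measure_display) (Omega : measurableType d)
          (P : probability Omega R) (A1 : Omega -> seq Req -> X),
      (forall w, A1 w [::] = s0) /\
      forall rho : seq Req,
        measurable_fun setT (fun w => det_cost cost (A1 w) rho) /\
        (\int[P]_w (det_cost cost (A1 w) rho)%:E
           <= (mixed_ecost cost step rho (pi0, m0))%:E)%E) /\
  (* (2) a behavioral online algorithm *)
  (exists (M2 : Type) (m2 : M2) (bstep : X -> M2 -> Req -> seq (R * (X * M2))),
      behavioral_valid bstep /\
      forall rho : seq Req,
        behavioral_ecost cost bstep rho s0 m2 <= mixed_ecost cost step rho (pi0, m0)) /\
  (* (3) a distributional online algorithm *)
  (exists (M3 : Type) (m3 : M3) (pi3 : fdist R X) (dstep : fdist R X -> M3 -> Req -> fdist R X * M3),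
      is_point_mass pi3 s0 /\
      forall rho : seq Req,
        distributional_cost cost dstep rho pi3 m3 <= mixed_ecost cost step rho (pi0, m0)).
Proof.
pose B := behavioral_of_mixed cost step.
have B_valid : behavioral_valid B := behavioral_of_mixed_valid cost_ge0 step_valid.
have B_cost rho : behavioral_ecost cost B rho s0 (pi0, m0) = mixed_ecost cost step rho (pi0, m0).
  by rewrite -behavioral_of_mixed_ecost // (fsbig_point_mass _ pi0_s0).
split; [|split].
- exists _, _, (uniform_prob (@ltr01 R)), (det_of_behavioral B (s0, (pi0, m0), 0, 1)).
  split=> // rho; have [mcost ->] := det_of_behavioral_cost cost_ge0 B_valid s0 (pi0, m0) rho.
  by rewrite B_cost.
- by exists _, (pi0, m0), B; split=> // rho; rewrite B_cost.
- pose L0 : valid_weights R X M := exist _ _ (weights_valid_unit (pi0, m0)).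
  exists _, L0, pi0, (distributional_of_mixed step_valid); split=> // rho.
  have := distributional_of_mixed_cost cost_ge0 step_valid rho (L := L0) (esym (mix_unit _)).
  by rewrite /= big_cons big_nil mul1r addr0.
Qed.
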